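(* Let $k\ge3$, $n\ge2$, $N\in\mathbb{Z}$, and let $P$ be an $N$-representative of a $k$-spiral $[P]\in\mathcal{P}_n$. If $P$ is of type $\alpha$, then $(P_i,P_{i+k},P_{i+2k})$ is positive for all $i>N$. If $P$ is of type $\beta$, then $(P_{i+2k},P_{i+k},P_i)$ is positive for all $i>N$.
   Context: The affine patch $\mathbb{A}^2=\{[x:y:1]\}\subset\mathbb{RP}^2$ is identified with $\mathbb{R}^2$. For $V_1,V_2,V_3\in\mathbb{A}^2$ with affine coordinates $\tilde V_j=(x_j,y_j,1)$, $\mathcal{O}(V_1,V_2,V_3)=\det(\tilde V_1,\tilde V_2,\tilde V_3)$; the triple is positive if $\mathcal{O}>0$. $\operatorname{int}(V_1,V_2,V_3)$ is the interior of the affine triangle. A twisted $n$-gon is a map $P:\mathbb{Z}\to\mathbb{RP}^2$ with every three consecutive points non-collinear and $P_{i+n}=M(P_i)$ for a fixed $M\in\mathrm{PGL}_3(\mathbb{R})$; $\mathcal{P}_n$ is the set of classes modulo projective equivalence. $P$ is $k$-nice if $P_i,P_{i+1},P_{i+k},P_{i+k+1}$ are in general position for every $i$. For $k\ge3$, $[P]\in\mathcal{P}_n$ is a $k$-spiral of type $\alpha$ (resp. $\beta$) if it is $k$-nice and for every $N\in\mathbb{Z}$ some representative $P$ satisfies, for all $i\ge N$: $P_i\in\mathbb{A}^2$, $(P_i,P_{i+1},P_{i+2})$ positive, and (type $\alpha$) $(P_i,P_{i+1},P_{i+k+1})$ positive with $P_{i+k}\in\operatorname{int}(P_i,P_{i+1},P_{i+k+1})$,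 resp. (type $\beta$) $(P_i,P_{i+1},P_{i+k})$ positive with $P_{i+k+1}\in\operatorname{int}(P_i,P_{i+1},P_{i+k})$. Such a representative is called an $N$-representative of type $\alpha$ (resp. $\beta$). *)

(* Points of RP^2 are represented by nonzero lifts in R^3
   (column vectors 'cV[R]_3); the affine patch A^2 = {[x:y:1]} is the set of
   points whose third homogeneous coordinate is nonzero. *)
From HB Require Import structures.
From mathcomp Require Import all_boot all_order all_algebra.
Set Implicit Arguments. Unset Strict Implicit. Unset Printing Implicit Defensive.
Import Order.TTheory GRing.Theory Num.Theory.
Local Open Scope ring_scope.

Section Spirals.
Variable R : realFieldType.
Notation vec := 'cV[R]_3.

Definition mx3 (u v w : vec) : 'M[R]_3 :=
  \matrix_(i < 3, j < 3)
    (if (j : nat) == 0%N then u i 0 else if (j : nat) == 1%N then v i 0 else w i 0).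

Definition det3 (u v w : vec) : R := \det (mx3 u v w).

Definition proj_eq (u v : vec) : Prop := exists2 c : R, c != 0 & u = c *: v.

Definition collinear (u v w : vec) : Prop := det3 u v w = 0.

Definition general_position4 (a b c d : vec) : Prop :=
  [/\ ~ collinear a b c, ~ collinear a b d, ~ collinear a c d & ~ collinear b c d].

Definition in_affine (v : vec) : Prop := v 2%:R 0 != 0.

Definition aff (v : vec) : vec := (v 2%:R 0)^-1 *: v.

Definition orient (u v w : vec) : R := det3 (aff u) (aff v) (aff w).

Definition positive_triple (u v w : vec) : Prop :=
  [/\ in_affine u, in_affine v, in_affine w & 0 < orient u v w].

Definition in_int (p a b c : vec) : Prop :=
  [/\ in_affine p, in_affine a, in_affine b, in_affine c &
   exists l1 l2 l3 : R, [/\ 0 < l1, 0 < l2, 0 < l3, l1 + l2 + l3 = 1 &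
       aff p = l1 *: aff a + l2 *: aff b + l3 *: aff c]].

Definition twisted_ngon (n : nat) (P : int -> vec) : Prop :=
  [/\ forall i, P i != 0,
      forall i, ~ collinear (P i) (P (i + 1)) (P (i + 2)) &
      exists2 M : 'M[R]_3, M \in unitmx &
        forall i, proj_eq (P (i + n%:Z)) (M *m P i)].

Definition proj_equiv (P Q : int -> vec) : Prop :=
  exists2 A : 'M[R]_3, A \in unitmx & forall i, proj_eq (Q i) (A *m P i).

Definition k_nice (k : nat) (P : int -> vec) : Prop :=
  forall i, general_position4 (P i) (P (i + 1)) (P (i + k%:Z)) (P (i + k%:Z + 1)).

Definition Nrep_alpha (k : nat) (N : int) (P : int -> vec) : Prop :=
  forall i, N <= i ->
    [/\ in_affine (P i),
        positive_triple (P i) (P (i + 1)) (P (i + 2)),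
        positive_triple (P i) (P (i + 1)) (P (i + k%:Z + 1)) &
        in_int (P (i + k%:Z)) (P i) (P (i + 1)) (P (i + k%:Z + 1))].

Definition Nrep_beta (k : nat) (N : int) (P : int -> vec) : Prop :=
  forall i, N <= i ->
    [/\ in_affine (P i),
        positive_triple (P i) (P (i + 1)) (P (i + 2)),
        positive_triple (P i) (P (i + 1)) (P (i + k%:Z)) &
        in_int (P (i + k%:Z + 1)) (P i) (P (i + 1)) (P (i + k%:Z))].

Definition spiral_alpha (k n : nat) (P : int -> vec) : Prop :=
  [/\ (3 <= k)%N, twisted_ngon n P, k_nice k P &
      forall N : int, exists Q, [/\ twisted_ngon n Q, proj_equiv P Q & Nrep_alpha k N Q]].

Definition spiral_beta (k n : nat) (P : int -> vec) : Prop :=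
  [/\ (3 <= k)%N, twisted_ngon n P, k_nice k P &
      forall N : int, exists Q, [/\ twisted_ngon n Q, proj_equiv P Q & Nrep_beta k N Q]].

End Spirals.

(* Both assertions come from one Plücker relation among orientations seen from the common
   apex P_{i+k}.  The N-representative conditions at indices i-1, i, i+k-1 and i+k fix the
   angular order in which the apex sees P_{i+k-1}, P_{i+k+1}, P_i and P_{i+2k}: five of the
   six orientations in the relation are thereby positive, which forces the sign of the
   sixth, the orientation of (P_i, P_{i+k}, P_{i+2k}). *)
From HB Require Import structures.
From mathcomp Require Import all_boot all_order all_algebra.
From mathcomp Require Import ring zify.
Import Order.TTheory GRing.Theory Num.Theory.
Local Open Scope ring_scope.

Section Orientation.
Variable R : realFieldType.
Implicit Types u v w p x y z a b c : 'cV[R]_3.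

(* Entries indexed by numerals through [inord], so that [ring] sees the nine entries as atoms. *)
Definition coord u (i : nat) : R := u (inord i) 0.

Lemma coord_ord u (i : 'I_3) : u i 0 = coord u i.
Proof. by rewrite /coord inord_val. Qed.

Lemma det3E u v w :
  det3 u v w = coord u 0 * (coord v 1 * coord w 2 - coord v 2 * coord w 1)
             - coord v 0 * (coord u 1 * coord w 2 - coord u 2 * coord w 1)
             + coord w 0 * (coord u 1 * coord v 2 - coord u 2 * coord v 1).
Proof.
rewrite /det3 (expand_det_col _ ord0) !big_ord_recr big_ord0 /cofactor /=.
rewrite !(expand_det_col _ ord0) !big_ord_recr big_ord0 /cofactor /= !det_mx11 !mxE /=.
by rewrite !coord_ord /= !big_ord0 /bump /=; ring.
Qed.

Lemma coord2 u : u 2%:R 0 = coord u 2.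
Proof. by rewrite /coord; congr (u _ _); apply: val_inj; rewrite /= inordK. Qed.

Lemma in_affineE u : in_affine u = (coord u 2 != 0).
Proof. by rewrite /in_affine coord2. Qed.

Lemma coord_aff u i : coord (aff u) i = (coord u 2)^-1 * coord u i.
Proof. by rewrite /coord /aff mxE coord2. Qed.

Definition affX u := coord (aff u) 0.
Definition affY u := coord (aff u) 1.

Lemma orientE a b c : in_affine a -> in_affine b -> in_affine c ->
  orient a b c = (affX b - affX a) * (affY c - affY a) - (affY b - affY a) * (affX c - affX a).
Proof.
rewrite !in_affineE => ha hb hc.
by rewrite /orient det3E /affX /affY !(coord_aff _ 2) !mulVf //; ring.
Qed.

Lemma orient_rotate {a b c} : in_affine a -> in_affine b -> in_affine c ->
  orient a b c = orient b c a.
Proof. by move=> ha hb hc; rewrite !orientE //; ring. Qed.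

Lemma orient_plucker p x y z w :
  in_affine p -> in_affine x -> in_affine y -> in_affine z -> in_affine w ->
  orient p x y * orient p z w = orient p x z * orient p y w + orient p x w * orient p z y.
Proof. by move=> *; rewrite !orientE //; ring. Qed.

(* The three sub-triangles cut out by an interior point have the barycentric weights as
   their relative areas. *)
Lemma in_int_orient {p a b c} : in_int p a b c -> 0 < orient a b c ->
  [/\ 0 < orient a b p, 0 < orient b c p & 0 < orient c a p].
Proof.
case=> hp ha hb hc [l1 [l2 [l3 [l1_gt0 l2_gt0 l3_gt0 l_sum p_bary]]]] abc_gt0.
have pX : affX p = l1 * affX a + l2 * affX b + l3 * affX c by rewrite /affX /coord p_bary !mxE.
have pY : affY p = l1 * affY a + l2 * affY b + l3 * affY c by rewrite /affY /coord p_bary !mxE.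
have l1E : l1 = 1 - l2 - l3 by rewrite -l_sum; ring.
have abp : orient a b p = l3 * orient a b c by rewrite !orientE // pX pY l1E; ring.
have bcp : orient b c p = l1 * orient a b c by rewrite !orientE // pX pY l1E; ring.
have cap : orient c a p = l2 * orient a b c by rewrite !orientE // pX pY l1E; ring.
by rewrite abp bcp cap !mulr_gt0.
Qed.

(* What [Nrep_alpha] (resp. [Nrep_beta]) asserts at an index i about the points
   P_i, P_{i+1}, P_{i+k}, P_{i+k+1}, apart from the consecutive triple. *)
Definition alpha_config a b c d : Prop := positive_triple a b d /\ in_int c a b d.
Definition beta_config a b c d : Prop := positive_triple a b c /\ in_int d a b c.

(* Instantiated with a0 = P_{i-1}, a = P_i, a1 = P_{i+1}, c = P_{i+k-1}, p = P_{i+k},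
   r = P_{i+k+1}, b0 = P_{i+2k-1}, b = P_{i+2k}, q = P_{i+2k+1}. *)
Lemma alpha_config_positive a0 a a1 c p r b0 b q :
  alpha_config a0 a c p -> alpha_config a a1 p r -> positive_triple c p r ->
  alpha_config c p b0 b -> alpha_config p r b q -> positive_triple a p b.
Proof.
move=> [[ha0 ha hp a0ap] c_in] [[_ ha1 hr aa1r] p_in] [hc _ _ cpr] [[_ _ hb cpb] _].
move=> [[_ _ hq prq] b_in].
have [_ apc _] := in_int_orient c_in a0ap.
have [_ _ rap] := in_int_orient p_in aa1r.
have [prb _ _] := in_int_orient b_in prq.
rewrite (orient_rotate hc hp hr) in cpr; rewrite (orient_rotate ha hp hc) in apc.
rewrite (orient_rotate hc hp hb) in cpb; rewrite -(orient_rotate hp hr ha) in rap.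
split => //; rewrite orient_rotate // -(pmulr_rgt0 _ cpr) orient_plucker //.
by rewrite addr_gt0 ?mulr_gt0.
Qed.

Lemma beta_config_positive a0 a a1 c p r b0 b q :
  beta_config a0 a c p -> beta_config a a1 p r -> positive_triple c p r ->
  beta_config c p b0 b -> beta_config p r b q -> positive_triple b p a.
Proof.
move=> [[ha0 ha hc a0ac] p_in] [[_ ha1 hp aa1p] r_in] [_ _ hr cpr] [[_ _ _ cpb0] b_in].
move=> [[_ _ hb prb] _].
have [_ acp _] := in_int_orient p_in a0ac.
have [_ _ par] := in_int_orient r_in aa1p.
have [cpb _ _] := in_int_orient b_in cpb0.
rewrite -(orient_rotate hp ha hc) in acp; rewrite (orient_rotate hc hp hr) in cpr.
rewrite (orient_rotate hc hp hb) in cpb.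
split => //; rewrite orient_rotate // -(pmulr_rgt0 _ cpr) mulrC orient_plucker //.
by rewrite addr_gt0 ?mulr_gt0.
Qed.

Section Representative.
Context {k : nat} {N : int} {P : int -> 'cV[R]_3}.

Lemma Nrep_alpha_consecutive {i j l} : Nrep_alpha k N P -> N <= i ->
  j = i + 1 -> l = i + 2 -> positive_triple (P i) (P j) (P l).
Proof. by move=> HP /HP[_ ? _ _] -> ->. Qed.

Lemma Nrep_alpha_config {i j l m} : Nrep_alpha k N P -> N <= i ->
  j = i + 1 -> l = i + k%:Z -> m = i + k%:Z + 1 -> alpha_config (P i) (P j) (P l) (P m).
Proof. by move=> HP /HP[_ _ ? ?] -> -> ->. Qed.

Lemma Nrep_beta_consecutive {i j l} : Nrep_beta k N P -> N <= i ->
  j = i + 1 -> l = i + 2 -> positive_triple (P i) (P j) (P l).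
Proof. by move=> HP /HP[_ ? _ _] -> ->. Qed.

Lemma Nrep_beta_config {i j l m} : Nrep_beta k N P -> N <= i ->
  j = i + 1 -> l = i + k%:Z -> m = i + k%:Z + 1 -> beta_config (P i) (P j) (P l) (P m).
Proof. by move=> HP /HP[_ _ ? ?] -> -> ->. Qed.

End Representative.
End Orientation.

Theorem mainTheorem4 (R : realFieldType) (k n : nat) (N : int) (P : int -> 'cV[R]_3) :
  (3 <= k)%N -> (2 <= n)%N ->
  (spiral_alpha k n P -> Nrep_alpha k N P ->
     forall i : int, N < i ->
       positive_triple (P i) (P (i + k%:Z)) (P (i + (2 * k)%N%:Z))) /\
  (spiral_beta k n P -> Nrep_beta k N P ->
     forall i : int, N < i ->
       positive_triple (P (i + (2 * k)%N%:Z)) (P (i + k%:Z)) (P i)).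
Proof.
move=> _ _; split=> [_ HP i Ni | _ HP i Ni].
- apply: (@alpha_config_positive _ (P (i - 1)) _ (P (i + 1)) (P (i + k%:Z - 1)) _
    (P (i + k%:Z + 1)) (P (i + (2 * k)%N%:Z - 1)) _ (P (i + (2 * k)%N%:Z + 1)));
    [ apply: (Nrep_alpha_config _ HP) | apply: (Nrep_alpha_config _ HP)
    | apply: (Nrep_alpha_consecutive _ HP) | apply: (Nrep_alpha_config _ HP)
    | apply: (Nrep_alpha_config _ HP) ]; lia.
- apply: (@beta_config_positive _ (P (i - 1)) _ (P (i + 1)) (P (i + k%:Z - 1)) _
    (P (i + k%:Z + 1)) (P (i + (2 * k)%N%:Z - 1)) _ (P (i + (2 * k)%N%:Z + 1)));
    [ apply: (Nrep_beta_config _ HP) | apply: (Nrep_beta_config _ HP)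
    | apply: (Nrep_beta_consecutive _ HP) | apply: (Nrep_beta_config _ HP)
    | apply: (Nrep_beta_config _ HP) ]; lia.
Qed.
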